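(* The poset $(P_1,\le)$ is directed: any two elements of $P_1$ have a common upper bound in $P_1$. Consequently its geometric realization $|P_1|$ is contractible.
   Context: Let $\mathfrak C=\{0,1\}^{\omega}$, $S$ a nonempty set, $G$ a subgroup of the symmetric group of $S$, and $\mathfrak C^S$ the space of functions $S\to\mathfrak C$. For $\psi\colon S\to\{0,1\}^*$ with $\psi(s)=\varnothing$ for all but finitely many $s$, the dyadic brick $B(\psi)$ is the set of $\kappa\in\mathfrak C^S$ with $\psi(s)$ a prefix of $\kappa(s)$ for all $s$; $\Phi_\psi(\kappa)(s)=\psi(s)\cdot\kappa(s)$ is the canonical homeomorphism $\mathfrak C^S\to B(\psi)$; for $\gamma\in G$, $\tau_\gamma(\kappa)(s)=\kappa(\gamma^{-1}s)$, and the twist homeomorphism $B(\varphi)\to B(\psi)$ associated to $\gamma$ is $\Phi_\psi\tau_\gamma\Phi_\varphi^{-1}$. For $m\ge1$, let $\mathfrak C^S(m)=\mathfrak C^S_1\sqcup\dots\sqcup\mathfrak C^S_m$ be a disjoint union of $m$ copies of $\mathfrak C^S$, with $\mathfrak C^S(1)=\mathfrak C^S$. A dyadic brick in $\mathfrak C^S(m)$ is a dyadic brick in one of the cubes; canonical and twist homeomorphisms between bricks in possibly different cubes are defined via the identifications of each cube with $\mathfrak C^S$. $S\mathcal V_G$ is the set of homeomorphisms $h\colon\mathfrak C^S(m)\to\mathfrak C^S(n)$ ($m,n\ge1$) for which there are partitions of $\mathfrak C^S(m)$ and $\mathfrak C^S(n)$ into the same number of dyadic bricks $B_i$, $B_i'$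 and $\gamma_i\in G$ such that $h$ maps each $B_i$ to $B_i'$ by the twist homeomorphism associated to $\gamma_i$; $n$ is the rank and $m$ the corank of $h$. The direct sum $h\oplus h'$ places $h$ on the first cubes and $h'$ on the remaining cubes of domain and range. For $\sigma\in\Sigma_n$, $p_\sigma$ maps each $\mathfrak C^S_i$ to $\mathfrak C^S_{\sigma(i)}$ by the identity identification; a twisted permutation of $\mathfrak C^S(n)$ is $(\tau_{\gamma_1}\oplus\dots\oplus\tau_{\gamma_n})p_\sigma$, and these form a group $\mathcal G(n)\cong G\wr\Sigma_n$. A very elementary expansion of a partition $\mathcal P$ of $\mathfrak C^S(m)$ into dyadic bricks is a partition $\mathcal P'$ into dyadic bricks such that every brick of $\mathcal P$ is a union of at most two bricks of $\mathcal P'$; a dyadic partition of $\mathfrak C^S(m)$ is one obtained from $\{\mathfrak C^S_1,\dots,\mathfrak C^S_m\}$ by finitely many very elementary expansions. A multicolored forest is a homeomorphism $f\colon\mathfrak C^S(m)\to\mathfrak C^S(n)$ mapping the bricks $B_1,\dots,B_n$ of some dyadic partition of $\mathfrak C^S(m)$ onto $\mathfrak C^S_1,\dots,\mathfrak C^S_n$ respectively by canonical homeomorphisms. For $h\in S\mathcal V_G$ of rank $n$ write $[h]=\mathcal G(n)h$, and let $P$ be the set of all such classes (rank and corank are well defined on $P$). For $v,w\in P$, $v\le w$ means there exist $h\in S\mathcal V_G$ and a multicolored forest $f$ with $v=[h]$ and $w=[fh]$; this is a partial order. $P_1\subseteq P$ is the set of classes of corank $1$. *)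

From mathcomp Require Import all_boot all_fingroup.
From Stdlib Require List.
Set Implicit Arguments. Unset Strict Implicit. Unset Printing Implicit Defensive.

Definition Cantor := nat -> bool.

Definition subgroup_sym (S : Type) (G : (S -> S) -> Prop) : Prop :=
  [/\ (forall g, G g -> bijective g),
      G id,
      (forall g h, G g -> G h -> G (g \o h)) &
      (forall g, G g -> exists g', [/\ G g', cancel g g' & cancel g' g])].

(* C^S(m) = disjoint union of m copies of C^S *)
Definition cube (S : Type) (m : nat) : Type := ('I_m * (S -> Cantor))%type.

Definition finsupp (S : Type) (psi : S -> seq bool) : Prop :=
  exists l : list S, forall s, psi s <> [::] -> List.In s l.

(* a dyadic brick of C^S(m): cube index and psi *)
Definition brick (S : Type) (m : nat) : Type := ('I_m * (S -> seq bool))%type.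

Definition dyadic_brick (S : Type) (m : nat) (b : brick S m) : Prop :=
  finsupp b.2.

Definition prefix_of (w : seq bool) (c : Cantor) : Prop :=
  forall k, k < size w -> c k = nth false w k.

Definition in_brick (S : Type) (m : nat) (b : brick S m) (x : cube S m) : Prop :=
  x.1 = b.1 /\ forall s, prefix_of (b.2 s) (x.2 s).

Definition wcat (w : seq bool) (c : Cantor) : Cantor :=
  fun k => if k < size w then nth false w k else c (k - size w).

Definition Phi (S : Type) (psi : S -> seq bool) (k : S -> Cantor) : S -> Cantor :=
  fun s => wcat (psi s) (k s).

(* k' = tau_gamma k, i.e. k'(s) = k(gamma^{-1} s), equivalently k'(gamma s) = k s *)
Definition is_twist (S : Type) (gamma : S -> S) (k k' : S -> Cantor) : Prop :=
  forall s, k' (gamma s) = k s.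

Definition brick_partition (S : Type) (m k : nat) (B : 'I_k -> brick S m) : Prop :=
  (forall j, dyadic_brick (B j)) /\
  forall x : cube S m, exists! j, in_brick (B j) x.

Definition very_elem_exp (S : Type) (m k k' : nat)
    (P : 'I_k -> brick S m) (P' : 'I_k' -> brick S m) : Prop :=
  brick_partition P' /\
  forall j, exists j1 j2, forall x, in_brick (P j) x <-> (in_brick (P' j1) x \/ in_brick (P' j2) x).

Definition initial_partition (S : Type) (m : nat) : 'I_m -> brick S m :=
  fun i => (i, fun _ => [::]).

Inductive dyadic_partition (S : Type) (m : nat) : forall k, ('I_k -> brick S m) -> Prop :=
  | dp_init : dyadic_partition (@initial_partition S m)
  | dp_step : forall k k' (P : 'I_k -> brick S m) (P' : 'I_k' -> brick S m),
      dyadic_partition P -> very_elem_exp P P' -> dyadic_partition P'.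

(* the set S V_G of elements of rank n and corank m *)
Definition SV (S : Type) (G : (S -> S) -> Prop) (m n : nat) (h : cube S m -> cube S n) : Prop :=
  [/\ 0 < m, 0 < n, bijective h &
   exists k (B : 'I_k -> brick S m) (B' : 'I_k -> brick S n) (gam : 'I_k -> S -> S),
     [/\ brick_partition B, brick_partition B', (forall j, G (gam j)) &
       forall j kap kap', is_twist (gam j) kap kap' ->
         h ((B j).1, Phi (B j).2 kap) = ((B' j).1, Phi (B' j).2 kap')]].

Definition forest (S : Type) (m n : nat) (f : cube S m -> cube S n) : Prop :=
  bijective f /\
  exists B : 'I_n -> brick S m, dyadic_partition B /\
    forall j kap, f ((B j).1, Phi (B j).2 kap) = (j, kap).

Definition twisted_perm (S : Type) (G : (S -> S) -> Prop) (n : nat) (g : cube S n -> cube S n) : Prop :=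
  exists (sigma : {perm 'I_n}) (gam : 'I_n -> S -> S),
    (forall i, G (gam i)) /\
    forall i kap kap', is_twist (gam (sigma i)) kap kap' -> g (i, kap) = (sigma i, kap').

Definition same_class (S : Type) (G : (S -> S) -> Prop) (m n : nat) (h h0 : cube S m -> cube S n) : Prop :=
  exists g, twisted_perm G g /\ forall x, h x = g (h0 x).

Definition Ple (S : Type) (G : (S -> S) -> Prop) (m n n' : nat)
    (h : cube S m -> cube S n) (h' : cube S m -> cube S n') : Prop :=
  exists (h0 : cube S m -> cube S n) (f : cube S n -> cube S n'),
    [/\ SV G h0, forest f, same_class G h h0 & same_class G h' (f \o h0)].

(* Given h1 and h2 of corank 1, take a uniform dyadic grid U of C^S, deep enough to refine
   the domain partitions of both, and let h3 send the i-th brick of U canonically onto the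
   i-th cube; h3 lies in SV_G.  Each h_k maps every brick of U by a twist onto a brick, and
   these image bricks form a partition R_k of C^S(n_k).  If R_k is dyadic, its multicolored
   forest f_k satisfies h3 = g_k f_k h_k for a twisted permutation g_k (identity permutation,
   twists inverse to those of h_k on the bricks of U), so [h_k] <= [h3].
   Dyadicity of R_k is the real work: for U deep enough, R_k refines a uniform grid V of
   C^S(n_k) so that all bricks of R_k inside one brick of V have the same shape, and such a
   uniform refinement of a dyadic partition is reached by halving one brick at a time. *)

From mathcomp Require Import all_boot all_fingroup zify.
From mathcomp Require Import boolp.
Set Implicit Arguments. Unset Strict Implicit. Unset Printing Implicit Defensive.

Section ListIn.
Variable T : Type.
Implicit Types (l : seq T) (y : T).

Lemma In_nth x0 l y : List.In y l -> exists2 i, i < size l & nth x0 l i = y.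
Proof.
elim: l => //= a l IH [-> | /IH[i il <-]]; first by exists 0.
by exists i.+1.
Qed.

Lemma nth_In x0 l i : i < size l -> List.In (nth x0 l i) l.
Proof. by elim: l i => //= a l IH [|i] /= il; [left | right; apply: IH]. Qed.

Lemma has_In (a : pred T) l : has a l -> exists2 y, List.In y l & a y.
Proof.
elim: l => //= y l IH /orP[ay | /IH[z zl az]]; first by exists y; [left|].
by exists z; [right|].
Qed.

Lemma count_le1_nth_inj (a : pred T) l x0 i j : count a l <= 1 ->
  i < size l -> j < size l -> a (nth x0 l i) -> a (nth x0 l j) -> i = j.
Proof.
have has_a k l' : k < size l' -> a (nth x0 l' k) -> 0 < count a l'.
  by move=> kl ak; rewrite -has_count; apply/(has_nthP x0); exists k.
elim: l i j => //= y l IH [|i] [|j] //= l1 il jl ai aj.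
- by have := has_a _ _ jl aj; move: l1; rewrite ai; lia.
- by have := has_a _ _ il ai; move: l1; rewrite aj; lia.
- by congr S; apply: IH => //; lia.
Qed.

End ListIn.

Lemma In_mem (T : eqType) (x : T) l : x \in l -> List.In x l.
Proof. by elim: l => //= y l IH; rewrite in_cons => /orP[/eqP ->|/IH]; [left|right]. Qed.

Lemma In_flatten_map (A T : Type) (f : A -> seq T) l a y :
  List.In a l -> List.In y (f a) -> List.In y (flatten (map f l)).
Proof. by elim: l => //= b l IH [->|al] yf; apply: List.in_or_app; [left|right; apply: IH]. Qed.

Section Words.
Implicit Types (u w : seq bool) (c : Cantor).

Lemma wcat_nil c : wcat [::] c = c.
Proof. by apply: funext => k; rewrite /wcat /= subn0. Qed.

Lemma wcat_cat u w c : wcat (u ++ w) c = wcat u (wcat w c).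
Proof.
apply: funext => k; rewrite /wcat size_cat nth_cat.
case: (ltnP k (size u)) => ku; first by have -> : k < size u + size w by lia.
case: (ltnP k (size u + size w)) => kuw; first by have -> : k - size u < size w by lia.
have -> : (k - size u < size w) = false by lia.
by rewrite subnDA.
Qed.

Lemma prefix_wcat w c : prefix_of w (wcat w c).
Proof. by move=> k kw; rewrite /wcat kw. Qed.

Lemma prefix_cat u w c :
  prefix_of (u ++ w) c <-> prefix_of u c /\ prefix_of w (fun k => c (size u + k)).
Proof.
rewrite /prefix_of; split=> [uw_c | [u_c w_c] k].
  split=> k kl; rewrite uw_c ?size_cat ?nth_cat; try lia.
    by rewrite kl.
  by rewrite ltnNge leq_addr /= addKn.
rewrite size_cat nth_cat => kl; case: ltnP => ku; first exact: u_c.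
by have := w_c (k - size u); rewrite subnKC // => ->; lia.
Qed.

Lemma prefix_take u w c :
  prefix_of u c -> prefix_of w c -> size u <= size w -> u = take (size u) w.
Proof.
move=> u_c w_c uw; apply: (@eq_from_nth _ false); first by rewrite size_takel.
by move=> k ku; rewrite nth_take // -u_c // w_c //; lia.
Qed.

Lemma wcat_shift u c : prefix_of u c -> wcat u (fun k => c (k + size u)) = c.
Proof.
move=> u_c; apply: funext => k; rewrite /wcat.
by case: ltnP => ku; [rewrite u_c | rewrite subnK].
Qed.

Lemma wcatK u c : (fun k => wcat u c (k + size u)) = c.
Proof.
apply: funext => k; rewrite /wcat.
have -> : (k + size u < size u) = false by lia.
by rewrite addnK.
Qed.

End Words.

Section Bricks.
Variables (S : Type) (m : nat).
Implicit Types (b p r v : brick S m) (x : cube S m) (z w : S -> seq bool).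

Definition brick_ext b z : brick S m := (b.1, fun s => b.2 s ++ z s).

Definition extends r b := exists z, r = brick_ext b z.

Definition brick_point b : cube S m := (b.1, Phi b.2 (fun _ _ => false)).

Definition brick_half (bit : bool) (s0 : S) b :=
  brick_ext b (fun s => if `[< s0 = s >] then [:: bit] else [::]).

Lemma in_brick_Phi b kap : in_brick b (b.1, Phi b.2 kap).
Proof. by split=> // s; apply: prefix_wcat. Qed.

Lemma in_brick_point b : in_brick b (brick_point b).
Proof. exact: in_brick_Phi. Qed.

Lemma in_brickP b x : in_brick b x <-> exists kap, x = (b.1, Phi b.2 kap).
Proof.
split=> [|[kap ->]]; last exact: in_brick_Phi.
case: x => i y [/= -> y_b]; exists (fun s k => y s (k + size (b.2 s))).
by congr pair; apply: funext => s; rewrite /Phi wcat_shift.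
Qed.

Lemma Phi_ext b z kap : Phi (brick_ext b z).2 kap = Phi b.2 (Phi z kap).
Proof. by apply: funext => s; rewrite /Phi /= wcat_cat. Qed.

Lemma in_brick_ext b z x : in_brick (brick_ext b z) x <->
  in_brick b x /\ forall s, prefix_of (z s) (fun k => x.2 s (size (b.2 s) + k)).
Proof.
rewrite /in_brick /=; split=> [[-> bz_x] | [[-> b_x] z_x]].
  by split; [split=> // s|move=> s]; have /prefix_cat[] := bz_x s.
by split=> // s; apply/prefix_cat.
Qed.

Lemma extends_sub r b x : extends r b -> in_brick r x -> in_brick b x.
Proof. by move=> [z ->] /in_brick_ext[]. Qed.

Lemma brick_ext_comp b z w :
  brick_ext (brick_ext b z) w = brick_ext b (fun s => z s ++ w s).
Proof. by congr pair; apply: funext => s; rewrite catA. Qed.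

Lemma brick_ext_nil b : brick_ext b (fun _ => [::]) = b.
Proof. by case: b => i psi; congr pair; apply: funext => s; rewrite cats0. Qed.

Lemma extends_refl b : extends b b.
Proof. by exists (fun _ => [::]); rewrite brick_ext_nil. Qed.

Lemma extends_trans r v b : extends r v -> extends v b -> extends r b.
Proof. by move=> [w ->] [z ->]; rewrite brick_ext_comp; eexists. Qed.

Lemma size_brick_ext b z s : size ((brick_ext b z).2 s) = size (b.2 s) + size (z s).
Proof. exact: size_cat. Qed.

Lemma extends_eq r b : extends r b -> (forall s, size (r.2 s) <= size (b.2 s)) -> r = b.
Proof.
move=> [z ->] size_z; suff -> : z = fun _ => [::] by rewrite brick_ext_nil.
apply: funext => s; apply: size0nil; have := size_z s; rewrite size_brick_ext; lia.
Qed.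

Lemma extends_of_overlap b v x : in_brick b x -> in_brick v x ->
  (forall s, size (b.2 s) <= size (v.2 s)) -> extends v b.
Proof.
case: v => i psi [b1 b_x] [/= v1 v_x] size_bv.
exists (fun s => drop (size (b.2 s)) (psi s)); congr pair; first by rewrite -v1.
by apply: funext => s; rewrite {1}(prefix_take (b_x s) (v_x s) (size_bv s)) cat_take_drop.
Qed.

Lemma in_brick_half bit s0 b x :
  in_brick (brick_half bit s0 b) x <-> in_brick b x /\ x.2 s0 (size (b.2 s0)) = bit.
Proof.
rewrite in_brick_ext; split=> [[b_x z_x] | [b_x x_bit]]; split=> //.
  by have := z_x s0 0; rewrite asboolT // addn0 => ->.
move=> s k; case: (asboolP (s0 = s)) => [<- | //].
by rewrite ltnS leqn0 => /eqP ->; rewrite addn0.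
Qed.

Lemma in_brick_halves s0 b x : in_brick b x <->
  in_brick (brick_half false s0 b) x \/ in_brick (brick_half true s0 b) x.
Proof.
rewrite !in_brick_half; split=> [b_x | [[]|[]] //].
by case: (x.2 s0 _); [right|left].
Qed.

Lemma count_halves s0 b x :
  `[< in_brick (brick_half false s0 b) x >] + `[< in_brick (brick_half true s0 b) x >]
  = `[< in_brick b x >].
Proof.
case: (asboolP (in_brick b x)) => [b_x | b_x]; last first.
  by rewrite !asboolF // => /in_brick_half[].
case E : (x.2 s0 (size (b.2 s0))).
  by rewrite asboolF ?asboolT // in_brick_half E // => -[].
by rewrite asboolT ?asboolF // in_brick_half E // => -[].
Qed.

Lemma extends_half r b s0 : extends r b -> size (b.2 s0) < size (r.2 s0) ->
  exists bit, extends r (brick_half bit s0 b).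
Proof.
move=> [z ->]; rewrite size_brick_ext; case E : (z s0) => [|bit w]; first by rewrite addn0 ltnn.
move=> _; exists bit; exists (fun s => if `[< s0 = s >] then behead (z s) else z s).
rewrite brick_ext_comp; congr brick_ext; apply: funext => s.
by case: (asboolP (s0 = s)) => // <-; rewrite E.
Qed.

Lemma finsupp_ext b z : finsupp b.2 -> finsupp z -> finsupp (brick_ext b z).2.
Proof.
move=> [T1 T1_b] [T2 T2_z]; exists (T1 ++ T2) => s /= bz_s; apply: List.in_or_app.
by case E : (b.2 s) bz_s => [|a l] /= bz_s; [right; apply: T2_z | left; apply: T1_b; rewrite E].
Qed.

Lemma finsupp_half bit s0 b : finsupp b.2 -> finsupp (brick_half bit s0 b).2.
Proof.
move=> b_fin; apply: finsupp_ext => //; exists [:: s0] => s.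
by case: (asboolP (s0 = s)) => // <- _; left.
Qed.

End Bricks.

Lemma brick_partition_uniq S m k (B : 'I_k -> brick S m) x j1 j2 : brick_partition B ->
  in_brick (B j1) x -> in_brick (B j2) x -> j1 = j2.
Proof. by move=> [_ /(_ x)[j [_ j_uniq]]] /j_uniq <- /j_uniq <-. Qed.

Lemma brick_partition_extends_uniq S m k (B : 'I_k -> brick S m) r j1 j2 :
  brick_partition B -> extends r (B j1) -> extends r (B j2) -> j1 = j2.
Proof.
move=> B_part r_j1 r_j2; apply: (brick_partition_uniq (x := brick_point r) B_part).
  exact: extends_sub r_j1 (in_brick_point r).
exact: extends_sub r_j2 (in_brick_point r).
Qed.

Lemma dyadic_brick_partition S m k (Q : 'I_k -> brick S m) :
  dyadic_partition Q -> brick_partition Q.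
Proof.
case=> [|k0 k1 P Q' _ [] //]; split=> [j | x]; first by exists [::].
by exists x.1; split=> // j [].
Qed.

Section SeqPartitions.
Variables (S : Type) (m : nat).
Implicit Types (l P R : seq (brick S m)) (b p r : brick S m) (x : cube S m).

Definition covering l x := count (fun b => `[< in_brick b x >]) l.

Definition seq_partition l :=
  (forall x, covering l x = 1) /\ (forall b, List.In b l -> finsupp b.2).

Lemma seq_partition_ex l x : seq_partition l -> exists2 b, List.In b l & in_brick b x.
Proof.
move=> [l_cov _]; have /has_In[b bl /asboolP b_x] : has (fun b => `[< in_brick b x >]) l.
  by rewrite has_count; have := l_cov x; rewrite /covering => ->.
by exists b.
Qed.

Lemma seq_partition_size_gt0 l : 0 < m -> seq_partition l -> 0 < size l.
Proof.
move=> m_gt0 l_part; have [b bl _] := seq_partition_ex (Ordinal m_gt0, fun _ _ => false) l_part.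
by case: l {l_part} bl.
Qed.

Lemma seq_partition_nth_inj l b0 x i j : seq_partition l -> i < size l -> j < size l ->
  in_brick (nth b0 l i) x -> in_brick (nth b0 l j) x -> i = j.
Proof.
move=> [l_cov _] il jl /asboolP bi_x /asboolP bj_x.
apply: (count_le1_nth_inj (a := fun b => `[< in_brick b x >]) (x0 := b0)) bi_x bj_x => //.
by have := l_cov x; rewrite /covering => ->.
Qed.

Lemma seq_partition_uniq l x b b' : seq_partition l -> List.In b l -> List.In b' l ->
  in_brick b x -> in_brick b' x -> b = b'.
Proof.
move=> l_part /(In_nth b)[i il <-] /(In_nth b)[j jl <-] bi_x bj_x.
by rewrite (seq_partition_nth_inj l_part il jl bi_x bj_x).
Qed.

Lemma brick_partition_nth l b0 k : seq_partition l -> size l = k ->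
  brick_partition (fun i : 'I_k => nth b0 l i).
Proof.
move=> l_part l_k; split=> [j | x]; first by apply: l_part.2; apply: nth_In; rewrite l_k.
have [b /(In_nth b0)[i il <-] bi_x] := seq_partition_ex x l_part.
have ik : i < k by rewrite -l_k.
exists (Ordinal ik); split=> // j bj_x; apply: val_inj => /=.
have jl : j < size l by rewrite l_k.
exact: (seq_partition_nth_inj l_part il jl bi_x bj_x).
Qed.

Lemma dyadic_partition_seq_step k (P : 'I_k -> brick S m) l b0 k' :
  dyadic_partition P -> seq_partition l -> size l = k' ->
  (forall j, exists b1 b2, [/\ List.In b1 l, List.In b2 l &
     forall x, in_brick (P j) x <-> in_brick b1 x \/ in_brick b2 x]) ->
  dyadic_partition (fun i : 'I_k' => nth b0 l i).
Proof.
move=> P_dy l_part l_k split_P; apply: (dp_step P_dy); split.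
  exact: brick_partition_nth.
move=> j; have [b1 [b2 [/(In_nth b0)[i1 i1l <-] /(In_nth b0)[i2 i2l <-] Pj]]] := split_P j.
by rewrite l_k in i1l i2l; exists (Ordinal i1l), (Ordinal i2l).
Qed.

Lemma seq_partition_split_half l1 l2 p s0 : seq_partition (l1 ++ p :: l2) ->
  seq_partition (l1 ++ brick_half false s0 p :: brick_half true s0 p :: l2).
Proof.
move=> [l_cov l_fin]; split=> [x | b].
  by have := l_cov x; rewrite /covering !count_cat /= -(count_halves s0 p x); lia.
have l_fin' b' : List.In b' l1 \/ p = b' \/ List.In b' l2 -> finsupp b'.2.
  by move=> b'l; apply: l_fin; rewrite List.in_app_iff.
rewrite List.in_app_iff /= => -[bl|[<-|[<-|bl]]]; try by apply: l_fin'; auto.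
all: by apply: finsupp_half; apply: l_fin'; auto.
Qed.

Definition refines R P := forall r, List.In r R -> exists2 p, List.In p P & extends r p.

(* Uniformity rules out pinwheel-like refinements, which no sequence of halvings reaches. *)
Definition uniform_over R P := forall p r r', List.In p P -> List.In r R -> List.In r' R ->
  extends r p -> extends r' p -> forall s, size (r.2 s) = size (r'.2 s).

Lemma seq_partition_size_le P R : seq_partition P -> seq_partition R -> refines R P ->
  size P <= size R.
Proof.
case: P => [//|b0 P'] P_part R_part R_P; set P := b0 :: P' in P_part R_P *.
have /choice[f f_in] : forall i : 'I_(size P),
    exists j : 'I_(size R), in_brick (nth b0 R j) (brick_point (nth b0 P i)).
  move=> i; have [r /(In_nth b0)[j jR <-] r_x] := seq_partition_ex
    (brick_point (nth b0 P i)) R_part.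
  by exists (Ordinal jR).
suff /leq_card : injective f by rewrite !card_ord.
move=> i1 i2 f12; have [p /(In_nth b0)[i iP <-] r_p] := R_P _ (nth_In b0 (ltn_ord (f i2))).
have in_Pi i' : f i' = f i2 -> val i' = i.
  move=> fi'; apply: (seq_partition_nth_inj P_part (ltn_ord i') iP (in_brick_point _)).
  by apply: extends_sub r_p _; rewrite -fi'.
by apply: val_inj; rewrite (in_Pi i1) // (in_Pi i2).
Qed.

Lemma uniform_over_refines R P P' : refines P' P -> uniform_over R P -> uniform_over R P'.
Proof.
move=> P'_P R_P p' r r' p'P' rR r'R r_p' r'_p'.
have [p pP p'_p] := P'_P p' p'P'.
exact: R_P pP rR r'R (extends_trans r_p' p'_p) (extends_trans r'_p' p'_p).
Qed.

Lemma dyadic_refinement_base R P b0 k :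
  seq_partition R -> seq_partition P -> dyadic_partition (fun i : 'I_(size P) => nth b0 P i) ->
  refines R P ->
  (forall r p s, List.In r R -> List.In p P -> extends r p -> size (r.2 s) <= size (p.2 s)) ->
  size R = k -> dyadic_partition (fun i : 'I_k => nth b0 R i).
Proof.
move=> R_part P_part P_dy R_P R_eq R_k.
apply: (dyadic_partition_seq_step b0 P_dy R_part R_k) => j; set p := nth b0 P j.
suff pR : List.In p R by exists p, p; split=> // x; split=> [|[]]; [left|..].
have pP : List.In p P by apply: nth_In.
have [r rR r_x] := seq_partition_ex (brick_point p) R_part.
have [p' p'P r_p'] := R_P r rR.
have r_eq := extends_eq r_p' (fun s => R_eq _ _ s rR p'P r_p').
rewrite r_eq in rR r_x.
by rewrite (seq_partition_uniq P_part pP p'P (in_brick_point p) r_x).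
Qed.

Lemma dyadic_refinement_step R P b0 :
  seq_partition P -> dyadic_partition (fun i : 'I_(size P) => nth b0 P i) ->
  refines R P -> uniform_over R P ->
  (exists r p s, [/\ List.In r R, List.In p P, extends r p & size (p.2 s) < size (r.2 s)]) ->
  exists P', [/\ size P' = (size P).+1, seq_partition P',
    dyadic_partition (fun i : 'I_(size P') => nth b0 P' i), refines R P' & uniform_over R P'].
Proof.
(* Halve p0 in coordinate s0: by uniformity every brick of R below p0 is longer than p0 at
   s0, hence lies below one of the two halves. *)
move=> P_part P_dy R_P R_unif [r0 [p0 [s0 [r0R p0P r0_p0 p0_r0]]]].
have [l1 [l2 P_eq]] := List.in_split p0 P p0P.
set h0 := brick_half false s0 p0; set h1 := brick_half true s0 p0.
set P' := l1 ++ h0 :: h1 :: l2.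
have inP b : List.In b P <-> List.In b l1 \/ p0 = b \/ List.In b l2.
  by rewrite P_eq List.in_app_iff.
have inP' b : List.In b P' <-> List.In b l1 \/ h0 = b \/ h1 = b \/ List.In b l2.
  by rewrite List.in_app_iff.
have P'_P : refines P' P.
  move=> b /inP'[bl|[<-|[<-|bl]]]; try by exists b; [apply/inP; auto | apply: extends_refl].
  - by exists p0 => //; eexists.
  - by exists p0 => //; eexists.
have P'_part : seq_partition P'.
  by move: P_part; rewrite P_eq; apply: seq_partition_split_half.
exists P'; split=> //.
- by rewrite /P' P_eq !size_cat /= addnS.
- apply: (dyadic_partition_seq_step b0 P_dy P'_part erefl) => j.
  have /inP[jl|[pj|jl]] := nth_In b0 (ltn_ord j).
  + by exists (nth b0 P j), (nth b0 P j); split; try (apply/inP'; auto); tauto.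
  + exists h0, h1; split; [apply/inP'; auto | apply/inP'; auto |].
    by rewrite -pj; apply: in_brick_halves.
  + by exists (nth b0 P j), (nth b0 P j); split; try (apply/inP'; auto); tauto.
- move=> r rR; have [p /inP[pl|[pr|pl]] r_p] := R_P r rR; try by exists p => //; apply/inP'; auto.
  rewrite -pr in r_p.
  have r_s0 : size (p0.2 s0) < size (r.2 s0).
    by rewrite -(R_unif p0 r0 r p0P r0R rR r0_p0 r_p s0).
  have [[] r_h] := extends_half r_p r_s0.
  + by exists h1 => //; apply/inP'; auto.
  + by exists h0 => //; apply/inP'; auto.
- exact: uniform_over_refines P'_P R_unif.
Qed.

Lemma dyadic_of_uniform_refinement R P b0 k :
  seq_partition R -> seq_partition P -> dyadic_partition (fun i : 'I_(size P) => nth b0 P i) ->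
  refines R P -> uniform_over R P -> size R = k ->
  dyadic_partition (fun i : 'I_k => nth b0 R i).
Proof.
move=> R_part; have [n RPn] := ubnP (size R - size P).
elim: n P RPn => // n IH P RPn P_part P_dy R_P R_unif R_k.
have [proper | no_proper] := pselect (exists r p s,
  [/\ List.In r R, List.In p P, extends r p & size (p.2 s) < size (r.2 s)]).
  have [P' [P'_size P'_part P'_dy R_P' R_unif']] :=
    dyadic_refinement_step P_part P_dy R_P R_unif proper.
  apply: (IH P') => //; have := seq_partition_size_le P'_part R_part R_P'; lia.
apply: (dyadic_refinement_base R_part P_part P_dy R_P _ R_k) => r p s rR pP r_p.
by rewrite leqNgt; apply/negP => lt; apply: no_proper; exists r, p, s.
Qed.

End SeqPartitions.

Section Occurrences.
Variable S : Type.
Implicit Types (cs : seq S) (f g : S -> nat).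

Definition occ cs s := count (fun c => `[< c = s >]) cs.

Definition fin_support f := exists T : seq S, forall s, 0 < f s -> List.In s T.

Lemma occ_In cs s : 0 < occ cs s -> List.In s cs.
Proof.
rewrite -has_count => /has_In[c cs_c /asboolP c_s].
by rewrite -c_s.
Qed.

Lemma occ_cover f : fin_support f -> exists cs, forall s, f s <= occ cs s.
Proof.
move=> [T T_f]; exists (flatten [seq nseq (f t) t | t <- T]) => s.
case: (posnP (f s)) => [-> // | /T_f].
elim: T {T_f} => //= t T IH [<- | sT]; rewrite /occ count_cat.
  by rewrite count_nseq asboolT //; lia.
by have := IH sT; rewrite /occ; lia.
Qed.

Lemma fin_support_add f g : fin_support f -> fin_support g -> fin_support (fun s => f s + g s).
Proof.
move=> [T1 T1_f] [T2 T2_g]; exists (T1 ++ T2) => s fg_s; apply: List.in_or_app.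
by case: (posnP (f s)) => [f0|/T1_f]; [right; apply: T2_g; lia | left].
Qed.

Lemma fin_support_bigmax k (F : 'I_k -> S -> nat) :
  (forall j, fin_support (F j)) -> fin_support (fun s => \max_(j < k) F j s).
Proof.
move=> /choice[T T_F]; exists (flatten [seq T j | j <- enum 'I_k]) => s max_s.
have [j Fj] : exists j, 0 < F j s.
  apply: contrapT => none; move: max_s; apply/negP; rewrite -leqNgt.
  by apply/bigmax_leqP => j _; rewrite leqNgt; apply/negP => Fj; apply: none; exists j.
by apply: (In_flatten_map (a := j)); [apply: In_mem; rewrite mem_enum | apply: T_F].
Qed.

Lemma fin_support_size (psi : S -> seq bool) : finsupp psi -> fin_support (fun s => size (psi s)).
Proof. by move=> [T T_psi]; exists T => s; rewrite lt0n size_eq0 => /eqP /T_psi. Qed.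

Lemma fin_support_occ_comp cs (gam gi : S -> S) : cancel gam gi ->
  fin_support (fun s => occ cs (gam s)).
Proof.
move=> gamK; exists (map gi cs) => s /occ_In cs_s.
by rewrite -(gamK s); apply: List.in_map.
Qed.

End Occurrences.

Section Grid.
Variables (S : Type) (m : nat).
Implicit Types (cs : seq S) (l : seq (brick S m)) (v : brick S m).

Definition halve_all s0 l :=
  flatten [seq [:: brick_half false s0 b; brick_half true s0 b] | b <- l].

(* The bricks of [grid cs] are all bricks whose word in coordinate s has length [occ cs s]. *)
Fixpoint grid cs : seq (brick S m) :=
  if cs is s :: cs' then halve_all s (grid cs')
  else [seq (i, fun _ => [::]) | i <- enum 'I_m].

Lemma In_halve_all s0 l v : List.In v (halve_all s0 l) <->
  exists bit b, List.In b l /\ v = brick_half bit s0 b.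
Proof.
elim: l v => [|b l IH] v; first by split=> // -[? [? []]].
change (List.In v [:: brick_half false s0 b, brick_half true s0 b & halve_all s0 l] <->
  exists bit b', List.In b' (b :: l) /\ v = brick_half bit s0 b') => /=.
split=> [[<-|[<-|/IH[bit [b' [b'l ->]]]]] | [bit [b' [[<-|b'l] ->]]]].
- by exists false, b; split; [left|].
- by exists true, b; split; [left|].
- by exists bit, b'; split; [right|].
- by case: bit; [right; left | left].
- by right; right; apply/IH; exists bit, b'.
Qed.

Lemma covering_halve_all s0 l x : covering (halve_all s0 l) x = covering l x.
Proof.
elim: l => // b l IH.
change (covering ([:: brick_half false s0 b; brick_half true s0 b] ++ halve_all s0 l) x
  = covering (b :: l) x).
move: IH; rewrite /covering count_cat => ->.
by rewrite /= -(count_halves s0 b x); lia.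
Qed.

Lemma grid_size cs v : List.In v (grid cs) -> forall s, size (v.2 s) = occ cs s.
Proof.
elim: cs v => [|c cs IH] v /=.
  by move=> /List.in_map_iff[i [<- _]].
move=> /In_halve_all[bit [b [b_grid ->]]] s; rewrite size_brick_ext IH //.
by rewrite /occ /=; case: (asboolP (c = s)) => _ /=; lia.
Qed.

Lemma grid_partition cs : seq_partition (grid cs).
Proof.
split=> [x | v v_grid]; last first.
  exists cs => s vs; apply: occ_In.
  by rewrite -(grid_size v_grid) lt0n size_eq0; apply/eqP.
elim: cs => [|c cs IH] /=; last by rewrite covering_halve_all.
rewrite /covering count_map (eq_count (a2 := pred1 x.1)).
  by rewrite count_uniq_mem ?enum_uniq // mem_enum.
by move=> i /=; apply/asboolP/eqP => [[]|->].
Qed.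

Lemma grid_dyadic b0 cs : dyadic_partition (fun i : 'I_(size (grid cs)) => nth b0 (grid cs) i).
Proof.
elim: cs => [|c cs IH].
  apply: (dyadic_partition_seq_step b0 (@dp_init S m) (grid_partition [::]) erefl) => j.
  have j_grid : List.In (j, fun _ : S => [::]) (grid [::]).
    by apply: List.in_map; apply: In_mem; rewrite mem_enum.
  by exists (j, fun _ => [::]), (j, fun _ => [::]); split=> // x; split=> [|[]]; [left|..].
apply: (dyadic_partition_seq_step b0 IH (grid_partition _) erefl) => j.
set b := nth b0 (grid cs) j; have b_grid : List.In b (grid cs) by apply: nth_In.
have half_in bit : List.In (brick_half bit c b) (halve_all c (grid cs)).
  by apply/In_halve_all; exists bit, b.
exists (brick_half false c b), (brick_half true c b).
by split; [apply: half_in | apply: half_in | apply: in_brick_halves].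
Qed.

Lemma grid_extends cs v b : List.In v (grid cs) -> in_brick b (brick_point v) ->
  (forall s, size (b.2 s) <= occ cs s) -> extends v b.
Proof.
move=> v_grid b_v b_cs; apply: extends_of_overlap b_v (in_brick_point v) _ => s.
by rewrite (grid_size v_grid).
Qed.

End Grid.

Section TwistMaps.
Variables (S : Type) (m n : nat) (h : cube S m -> cube S n).
Implicit Types (b : brick S m) (c : brick S n) (g : S -> S).

Definition twists_onto b c g :=
  forall kap kap', is_twist g kap kap' -> h (b.1, Phi b.2 kap) = (c.1, Phi c.2 kap').

Lemma twists_onto_in b c g gi : twists_onto b c g -> cancel g gi ->
  forall x, in_brick b x -> in_brick c (h x).
Proof.
move=> h_tw gK x /in_brickP[kap ->].
by rewrite (h_tw kap (fun t => kap (gi t))) => [|s]; [apply: in_brick_Phi | rewrite /= gK].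
Qed.

Lemma twists_onto_in_inv b c g : injective h -> twists_onto b c g ->
  forall x, in_brick c (h x) -> in_brick b x.
Proof.
move=> h_inj h_tw x /in_brickP[kap' hx].
have := h_tw (fun s => kap' (g s)) kap' (fun s => erefl); rewrite -hx => /h_inj <-.
exact: in_brick_Phi.
Qed.

Lemma twists_onto_ext b c g gi z : twists_onto b c g -> cancel g gi ->
  twists_onto (brick_ext b z) (brick_ext c (fun t => z (gi t))) g.
Proof.
move=> h_tw gK kap kap' tw; rewrite !Phi_ext; apply: h_tw => s.
by rewrite /Phi gK tw.
Qed.

End TwistMaps.

Section GridImage.
Variables (S : Type) (m n k : nat) (h : cube S m -> cube S n).
Variables (B : 'I_k -> brick S m) (B' : 'I_k -> brick S n) (gam gi : 'I_k -> S -> S).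
Hypotheses (B_part : brick_partition B) (B'_part : brick_partition B').
Hypotheses (gamK : forall j, cancel (gam j) (gi j)) (giK : forall j, cancel (gi j) (gam j)).
Hypothesis h_twists : forall j, twists_onto h (B j) (B' j) (gam j).
Variable blk : cube S m -> 'I_k.
Hypothesis blkP : forall x, in_brick (B (blk x)) x.

Definition image_brick (u : brick S m) : brick S n :=
  let j := blk (brick_point u) in
  brick_ext (B' j) (fun t => drop (size ((B j).2 (gi j t))) (u.2 (gi j t))).

Lemma image_brick_ext j z :
  image_brick (brick_ext (B j) z) = brick_ext (B' j) (fun t => z (gi j t)).
Proof.
rewrite /image_brick; have -> : blk (brick_point (brick_ext (B j) z)) = j.
  apply: brick_partition_uniq B_part (blkP _) _.
  exact: extends_sub (ex_intro _ z erefl) (in_brick_point _).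
by congr brick_ext; apply: funext => t; rewrite drop_size_cat.
Qed.

Variables (csU csV : seq S).
Hypothesis csV_B' : forall j t, size ((B' j).2 t) <= occ csV t.
Hypothesis csU_fine : forall j s, occ csV (gam j s) + size ((B j).2 s) <= occ csU s.

Let U := grid m csU.
Let V := grid n csV.

Lemma grid_extends_block u : List.In u U -> extends u (B (blk (brick_point u))).
Proof.
move=> uU; apply: grid_extends uU (blkP _) _ => s.
by apply: leq_trans (csU_fine _ s); apply: leq_addl.
Qed.

Lemma image_brick_twists u : List.In u U ->
  twists_onto h u (image_brick u) (gam (blk (brick_point u))).
Proof.
move=> /grid_extends_block[z u_eq]; rewrite [in image_brick u]u_eq image_brick_ext.
by rewrite {1}u_eq; apply: twists_onto_ext.
Qed.

Lemma size_image_brick u t : List.In u U -> let j := blk (brick_point u) in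
  size ((image_brick u).2 t) = size ((B' j).2 t) + (occ csU (gi j t) - size ((B j).2 (gi j t))).
Proof. by move=> /grid_size u_size j; rewrite size_brick_ext size_drop u_size. Qed.

Lemma image_partition (h_bij : bijective h) : seq_partition (map image_brick U).
Proof.
have h_inj := bij_inj h_bij; have [hinv hK hinvK] := h_bij.
split=> [y | r /List.in_map_iff[u [<- uU]]].
  rewrite -(hinvK y) /covering count_map -((grid_partition m csU).1 (hinv y)).
  apply: eq_in_count => u /In_mem uU /=; apply/asboolP/asboolP.
    exact: twists_onto_in_inv h_inj (image_brick_twists uU) _.
  exact: twists_onto_in (image_brick_twists uU) (gamK _) _.
apply: finsupp_ext; first exact: B'_part.1.
set j := blk _; exists (map (gam j) csU) => t ut; rewrite -(giK j t); apply: List.in_map.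
apply: occ_In; rewrite -(grid_size uU) lt0n size_eq0; apply/eqP => u0.
by apply: ut; rewrite u0 drop_oversize.
Qed.

Lemma grid_in_block v : List.In v V -> exists j, extends v (B' j).
Proof.
move=> vV; have [j [v_j _]] := B'_part.2 (brick_point v).
by exists j; apply: grid_extends vV v_j (csV_B' j).
Qed.

Lemma image_refines : refines (map image_brick U) V.
Proof.
move=> r /List.in_map_iff[u [<- uU]].
have [v vV v_r] := seq_partition_ex (brick_point (image_brick u)) (grid_partition n csV).
exists v => //; apply: extends_of_overlap v_r (in_brick_point _) _ => t.
rewrite (grid_size vV) (size_image_brick _ uU).
have := csU_fine (blk (brick_point u)) (gi (blk (brick_point u)) t); rewrite giK; lia.
Qed.

Lemma image_uniform : uniform_over (map image_brick U) V.
Proof.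
move=> v r r' vV /List.in_map_iff[u [<- uU]] /List.in_map_iff[u' [<- u'U]] r_v r'_v t.
have [j v_j] := grid_in_block vV.
have block_eq w : extends (image_brick w) v -> blk (brick_point w) = j.
  by move=> w_v; apply: brick_partition_extends_uniq B'_part (ex_intro _ _ erefl)
    (extends_trans w_v v_j).
by rewrite !size_image_brick // (block_eq u) // (block_eq u').
Qed.

Lemma image_dyadic (h_bij : bijective h) b0 :
  dyadic_partition (fun i : 'I_(size U) => image_brick (nth b0 U i)).
Proof.
have -> : (fun i : 'I_(size U) => image_brick (nth b0 U i)) =
    (fun i => nth (image_brick b0) (map image_brick U) i).
  by apply: funext => i; rewrite (nth_map b0).
apply: (dyadic_of_uniform_refinement (image_partition h_bij) (grid_partition n csV)
  (grid_dyadic _ _) image_refines image_uniform).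
exact: size_map.
Qed.

End GridImage.

Section Charts.
Variables (S : Type) (m : nat).

Definition is_chart k (Q : 'I_k -> brick S m) (f : cube S m -> cube S k) :=
  forall j kap, f ((Q j).1, Phi (Q j).2 kap) = (j, kap).

Lemma chart_exists k (Q : 'I_k -> brick S m) : brick_partition Q ->
  exists2 f : cube S m -> cube S k, bijective f & is_chart Q f.
Proof.
move=> Q_part; have /choice[blk blkP] : forall x, exists j, in_brick (Q j) x.
  by move=> x; have [j []] := Q_part.2 x; exists j.
pose f x := (blk x, fun s k => x.2 s (k + size ((Q (blk x)).2 s))).
have f_chart : is_chart Q f.
  move=> j kap; rewrite /f; have -> : blk ((Q j).1, Phi (Q j).2 kap) = j.
    exact: brick_partition_uniq Q_part (blkP _) (in_brick_Phi _ _).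
  by congr pair; apply: funext => s; apply: wcatK.
exists f => //; exists (fun y => ((Q y.1).1, Phi (Q y.1).2 y.2)) => [x | [j kap]]; last first.
  by rewrite f_chart.
have [x1 Q_x] := blkP x; apply: injective_projections => /=; first by rewrite x1.
by apply: funext => s; rewrite /Phi wcat_shift.
Qed.

End Charts.

Lemma same_class_refl S (G : (S -> S) -> Prop) m n (h : cube S m -> cube S n) :
  G id -> same_class G h h.
Proof.
move=> G_id; exists id; split=> //; exists 1%g, (fun _ => id); split=> // i kap kap' tw.
by rewrite perm1; congr pair; apply: funext => s; rewrite -tw.
Qed.

Lemma chart_SV S (G : (S -> S) -> Prop) m k (Q : 'I_k -> brick S m) (f : cube S m -> cube S k) :
  G id -> 0 < m -> 0 < k -> brick_partition Q -> bijective f -> is_chart Q f -> SV G f.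
Proof.
move=> G_id m_gt0 k_gt0 Q_part f_bij f_chart; split=> //.
exists k, Q, (initial_partition S (m := k)), (fun _ => id); split=> //.
  exact: dyadic_brick_partition (dp_init _ _).
move=> j kap kap' tw; rewrite f_chart; congr pair; apply: funext => s.
by rewrite /Phi wcat_nil tw.
Qed.

Lemma Ple_of_twisted_images S (G : (S -> S) -> Prop) m n p
    (h : cube S m -> cube S n) (h3 : cube S m -> cube S p)
    (U : 'I_p -> brick S m) (R : 'I_p -> brick S n) (gam gi : 'I_p -> S -> S) :
  G id -> SV G h -> brick_partition U -> dyadic_partition R ->
  (forall i, [/\ G (gi i), cancel (gam i) (gi i) & twists_onto h (U i) (R i) (gam i)]) ->
  is_chart U h3 -> Ple G h h3.
Proof.
move=> G_id h_SV U_part R_dy tw h3_chart.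
have [f f_bij f_chart] := chart_exists (dyadic_brick_partition R_dy).
exists h, f; split=> //; [by split=> //; exists R | exact: same_class_refl |].
exists (fun y : cube S p => (y.1, fun s => y.2 (gam y.1 s))); split.
  exists 1%g, gi; split=> [i | i kap kap']; first by have [] := tw i.
  rewrite perm1 => kap_tw /=; congr pair; apply: funext => s.
  by have [_ gamK _] := tw i; rewrite -kap_tw gamK.
move=> x; have [i [x_i _]] := U_part.2 x; have [kap ->] := (in_brickP _ _).1 x_i.
have [_ gamK h_tw] := tw i.
rewrite h3_chart /= (h_tw kap (fun t => kap (gi i t))) => [|s]; last by rewrite /= gamK.
by rewrite f_chart /=; congr pair; apply: funext => s; rewrite gamK.
Qed.

Lemma SV_grid_refinement S (G : (S -> S) -> Prop) m n (h : cube S m -> cube S n) :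
  subgroup_sym G -> SV G h ->
  exists2 f : S -> nat, fin_support f & forall csU, (forall s, f s <= occ csU s) ->
    forall b0 h3, is_chart (fun i : 'I_(size (grid m csU)) => nth b0 (grid m csU) i) h3 ->
    Ple G h h3.
Proof.
move=> [_ G_id _ G_inv] h_SV.
have [_ _ h_bij [k [B [B' [gam [B_part B'_part G_gam h_tw]]]]]] := h_SV.
change (forall j, twists_onto h (B j) (B' j) (gam j)) in h_tw.
have /choice[gi gi_spec] : forall j, exists g', [/\ G g', cancel (gam j) g' & cancel g' (gam j)].
  by move=> j; apply: G_inv.
have G_gi j : G (gi j) by have [] := gi_spec j.
have gamK j : cancel (gam j) (gi j) by have [] := gi_spec j.
have giK j : cancel (gi j) (gam j) by have [] := gi_spec j.
have /choice[blk blkP] : forall x, exists j, in_brick (B j) x.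
  by move=> x; have [j []] := B_part.2 x; exists j.
have [csV csV_max] := occ_cover (fin_support_bigmax (fun j => fin_support_size (B'_part.1 j))).
have csV_B' j t : size ((B' j).2 t) <= occ csV t.
  by apply: leq_trans (csV_max t); apply: leq_bigmax.
(* U = grid m csU must refine B, and each image brick must be at least as deep as the grid
   V = grid n csV in every coordinate t = gam j s. *)
exists (fun s => \max_(j < k) (occ csV (gam j s) + size ((B j).2 s))).
  apply: fin_support_bigmax => j; apply: fin_support_add.
    exact: fin_support_occ_comp (gamK j).
  exact: fin_support_size (B_part.1 j).
move=> csU csU_max b0 h3 h3_chart.
have csU_fine j s : occ csV (gam j s) + size ((B j).2 s) <= occ csU s.
  by apply: leq_trans (csU_max s); apply: leq_bigmax.
apply: (Ple_of_twisted_images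
  (R := fun i => image_brick B B' gi blk (nth b0 (grid m csU) i))
  (gam := fun i => gam (blk (brick_point (nth b0 (grid m csU) i))))
  (gi := fun i => gi (blk (brick_point (nth b0 (grid m csU) i))))) h3_chart => //.
- exact: brick_partition_nth (grid_partition m csU) erefl.
- exact: (image_dyadic B_part B'_part gamK giK h_tw blkP csV_B' csU_fine h_bij b0).
- move=> i; split; [exact: G_gi | exact: gamK |].
  exact: (image_brick_twists B_part gamK h_tw blkP csU_fine (nth_In b0 (ltn_ord i))).
Qed.

Theorem proposition5p2 (S : Type) (G : (S -> S) -> Prop)
    (HS : inhabited S) (HG : subgroup_sym G)
    (n1 n2 : nat) (h1 : cube S 1 -> cube S n1) (h2 : cube S 1 -> cube S n2) :
  SV G h1 -> SV G h2 ->
  exists (n3 : nat) (h3 : cube S 1 -> cube S n3),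
    [/\ SV G h3, Ple G h1 h3 & Ple G h2 h3].
Proof.
move=> h1_SV h2_SV.
have [f1 f1_fin h1_ple] := SV_grid_refinement HG h1_SV.
have [f2 f2_fin h2_ple] := SV_grid_refinement HG h2_SV.
have [csU csU_f] := occ_cover (fin_support_add f1_fin f2_fin).
pose b0 : brick S 1 := (ord0, fun _ => [::]).
have U_part := brick_partition_nth b0 (grid_partition 1 csU) erefl.
have [h3 h3_bij h3_chart] := chart_exists U_part.
exists (size (grid 1 csU)), h3; split.
- apply: chart_SV U_part h3_bij h3_chart => //; first by case: HG.
  exact: seq_partition_size_gt0 (grid_partition 1 csU).
- by apply: h1_ple h3_chart => s; have := csU_f s; lia.
- by apply: h2_ple h3_chart => s; have := csU_f s; lia.
Qed.
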